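(* Let $E$ be a classification instance with feature set $F$ containing at least one positive and at least one negative example. Then $|E|\le 2\binom{|F|}{\delta_{\max}}D_{\max}^{\delta_{\max}}$.
   Context: A classification instance (CI) $E=E^+\cup E^-$ is a finite set (no repetitions) of examples $e:F\to\mathbb{Z}$ over a common feature set $F$, partitioned into positive examples $E^+$ and negative examples $E^-$. For examples $e,e'$, $\lambda(e,e')$ is the set of features on which they differ; $\delta_{\max}=\max_{e^+\in E^+,e^-\in E^-}|\lambda(e^+,e^-)|$. $D_{\max}=\max_{f\in F}|\{e(f):e\in E\}|$. *)

From HB Require Import structures.
From mathcomp Require Import all_boot all_order all_algebra.
From mathcomp Require Import finmap.
Set Implicit Arguments. Unset Strict Implicit. Unset Printing Implicit Defensive.
Local Open Scope fset_scope.

Definition example (F : finType) := {ffun F -> int}.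

Definition lambda (F : finType) (e e' : example F) : {set F} :=
  [set f | e f != e' f].

Definition delta_max (F : finType) (Ep En : {fset example F}) : nat :=
  \max_(p <- Ep) \max_(n <- En) #|lambda p n|.

Definition D_max (F : finType) (Ep En : {fset example F}) : nat :=
  \max_(f : F) #|` [fset (e : example F) f | e in Ep `|` En] |.

From HB Require Import structures.
From mathcomp Require Import all_boot all_order all_algebra.
From mathcomp Require Import finmap.
Set Implicit Arguments. Unset Strict Implicit. Unset Printing Implicit Defensive.
Local Open Scope fset_scope.

(* Fix a negative example c.  Every positive example x differs from c on at
   most delta_max features, so x is determined by a delta_max-set A of
   features containing lambda(c, x) together with the values of x on A, each
   chosen among at most D_max values.  Double counting over the
   'C(|F|, delta_max) sets A bounds |E+|, and symmetrically |E-|. *)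

Lemma exists_superset_of_card (T : finType) (A : {set T}) (k : nat) :
  #|A| <= k -> k <= #|T| -> exists2 B : {set T}, A \subset B & #|B| = k.
Proof.
elim: k => [|k IHk] leAk lekT.
  by exists A => //; apply/eqP; rewrite -leqn0.
case: (ltngtP #|A| k.+1) => [ltAk | | eqAk]; last by exists A.
  have [B subAB cardB] := IHk ltAk (ltnW lekT).
  have /card_gt0P [x] : 0 < #|~: B| by rewrite cardsCs setCK cardB subn_gt0.
  rewrite in_setC => xNB.
  exists (x |: B); last by rewrite cardsU1 xNB cardB.
  by apply: subset_trans subAB (subsetUr _ _).
by rewrite ltnNge leAk.
Qed.

Section HammingBall.

Variables (F : finType) (T : eqType) (c : {ffun F -> T}).
Variables (V : F -> seq T) (D : nat).
Hypothesis size_V : forall f, size (V f) <= D.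

Lemma count_agree_off_le (A : {set F}) (s : seq {ffun F -> T}) :
  uniq s -> {in s, forall (x : {ffun F -> T}) f, x f \in V f} ->
  count (fun x : {ffun F -> T} => [set f | c f != x f] \subset A) s <= D ^ #|A|.
Proof.
move=> uniq_s s_V; set P := fun x => _ \subset A.
have s'_V : {in filter P s, forall (x : {ffun F -> T}) f, x f \in V f}.
  by move=> x; rewrite mem_filter => /andP [_]; apply: s_V.
have index_lt x f : x \in filter P s -> index (x f) (V f) < D.
  by move=> sx; apply: leq_trans (size_V f); rewrite index_mem s'_V.
(* Coordinates outside A are forced; inside A, the code is 1 + the position
   of the value in V f, so that 0 marks "outside A". *)
pose code (x : {ffun F -> T}) : {ffun F -> 'I_D.+1} :=
  [ffun f => if f \in A then inord (index (x f) (V f)).+1 else ord0].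
have code_inj : {in filter P s &, injective code}.
  move=> x y sx sy /ffunP eq_code; apply/ffunP => f.
  have := eq_code f; rewrite !ffunE.
  case: ifP => [fA | fNA _].
    move/(congr1 val); rewrite /= !inordK ?ltnS ?index_lt // => -[eq_index].
    by rewrite -(nth_index (x f) (s'_V x sx f)) eq_index nth_index ?s'_V.
  have agree z : z \in filter P s -> z f = c f.
    rewrite mem_filter => /andP [/subsetP subA _]; apply/eqP; rewrite eq_sym.
    by apply: contraFT fNA => neq; apply: subA; rewrite inE.
  by rewrite !agree.
rewrite -size_filter -(size_map code).
have <- : #|pffun_on ord0 A (predC1 (ord0 : 'I_D.+1))| = D ^ #|A|.
  by rewrite card_pffun_on cardC1 card_ord.
rewrite cardE.
apply: uniq_leq_size; first by rewrite map_inj_in_uniq ?filter_uniq.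
move=> _ /mapP [x sx ->]; rewrite mem_enum; apply/pffun_onP; split.
  by apply/subsetP => f; rewrite !inE ffunE; case: ifP.
move=> _ /imageP [f fA ->]; rewrite ffunE fA !inE.
by rewrite -val_eqE /= inordK ?ltnS ?index_lt.
Qed.

Lemma size_hamming_ball_le (d : nat) (s : seq {ffun F -> T}) :
  uniq s -> d <= #|F| -> {in s, forall (x : {ffun F -> T}) f, x f \in V f} ->
  {in s, forall x : {ffun F -> T}, #|[set f | c f != x f]| <= d} ->
  size s <= 'C(#|F|, d) * D ^ d.
Proof.
move=> uniq_s ledF s_V s_d.
rewrite -sum1_size -card_draws -sum_nat_const.
apply: (@leq_trans (\sum_(x <- s) \sum_(A in [set A : {set F} | #|A| == d])
                     ([set f | c f != x f] \subset A))).
  rewrite big_seq_cond [X in _ <= X]big_seq_cond; apply: leq_sum => x /andP [sx _].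
  have [B subB cardB] := exists_superset_of_card (s_d x sx) ledF.
  rewrite (bigD1 B) ?inE ?cardB //= subB; exact: leq_addr.
rewrite exchange_big /=; apply: leq_sum => A; rewrite inE => /eqP <-.
apply: leq_trans (count_agree_off_le A uniq_s s_V).
by rewrite -sum1_count [X in _ <= X]big_mkcond.
Qed.

End HammingBall.

Lemma lambdaC (F : finType) (e e' : example F) : lambda e e' = lambda e' e.
Proof. by apply/setP => f; rewrite !inE eq_sym. Qed.

Section ClassificationInstance.

Variables (F : finType) (Ep En : {fset example F}).

Lemma delta_max_le_card : delta_max Ep En <= #|F|.
Proof.
by apply/bigmax_leqP_seq => p _ _; apply/bigmax_leqP_seq => n _ _; apply: max_card.
Qed.

Lemma card_lambda_le_delta_max (p n : example F) :
  p \in Ep -> n \in En -> #|lambda p n| <= delta_max Ep En.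
Proof.
move=> pEp nEn.
apply: leq_trans (leq_bigmax_seq (F := fun p => \max_(n <- En) #|lambda p n|) p pEp erefl).
exact: (leq_bigmax_seq (F := fun n => #|lambda p n|) n nEn erefl).
Qed.

Definition feature_values (f : F) : seq int :=
  [fset (e : example F) f | e in Ep `|` En].

Lemma size_feature_values_le (f : F) : size (feature_values f) <= D_max Ep En.
Proof.
exact: (leq_bigmax (F := fun f => #|` [fset (e : example F) f | e in Ep `|` En]|) f).
Qed.

Lemma mem_feature_values (e : example F) (f : F) :
  e \in Ep `|` En -> e f \in feature_values f.
Proof. by move=> eE; apply/imfsetP; exists e. Qed.

End ClassificationInstance.

Theorem lemma8 (F : finType) (Ep En : {fset example F}) :
  [disjoint Ep & En] ->
  Ep != fset0 -> En != fset0 ->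
  #|` Ep `|` En| <= 2 * 'C(#|F|, delta_max Ep En) * D_max Ep En ^ delta_max Ep En.
Proof.
move=> _ /fset0Pn [p pEp] /fset0Pn [n nEn].
have ball_le := size_hamming_ball_le (size_feature_values_le Ep En).
rewrite cardfsU -mulnA mul2n -addnn; apply: leq_trans (leq_subr _ _) _.
apply: leq_add.
- apply: (ball_le n) (fset_uniq Ep) (delta_max_le_card Ep En) _ _.
    by move=> e eEp f; apply: mem_feature_values; rewrite inE eEp.
  by move=> e eEp; rewrite -/(lambda n e) lambdaC card_lambda_le_delta_max.
- apply: (ball_le p) (fset_uniq En) (delta_max_le_card Ep En) _ _.
    by move=> e eEn f; apply: mem_feature_values; rewrite inE eEn orbT.
  by move=> e eEn; apply: card_lambda_le_delta_max.
Qed.
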